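(* For every $d\ge 1$, the set $X=(L_0\cup L_d)\setminus\{[0,11\cdots1],[d,11\cdots1]\}$ is a mutual-visibility set of $\mathit{BF}(d)$. In particular $\mu(\mathit{BF}(d))\ge 2^{d+1}-2$.
   Context: Binary strings $c=c_0\cdots c_{d-1}$ have positions $0,\dots,d-1$ from the left; $c(i)$ is $c$ with bit $i$ complemented. $\mathit{BF}(d)$ has vertex set $\{[\ell,c]:\ell\in\{0,\dots,d\},\ c\in\{0,1\}^d\}$; for $\ell\in\{0,\dots,d-1\}$, $[\ell,c]$ is adjacent to $[\ell+1,c']$ iff $c'=c$ or $c'=c(\ell)$, and there are no other edges. $L_j=\{[j,c]:c\in\{0,1\}^d\}$ is level $j$. For a connected graph $G$ and $X\subseteq V(G)$, two vertices $x,y$ are $X$-visible if some shortest $x,y$-path has no internal vertex in $X$; $X$ is a mutual-visibility set if every two vertices of $X$ are $X$-visible; $\mu(G)$ is the maximum size of a mutual-visibility set. *)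

From Stdlib Require Import ClassicalEpsilon.
From mathcomp Require Import all_boot.
Set Implicit Arguments. Unset Strict Implicit. Unset Printing Implicit Defensive.

Section Visibility.
Variables (T : finType) (e : rel T).

Definition shortest_path (x y : T) (p : seq T) : Prop :=
  [/\ path e x p, last x p = y &
      forall q : seq T, path e x q -> last x q = y -> size p <= size q].

(* internal vertices of the path x :: p (p ends at the other end vertex) *)
Definition internal (p : seq T) : seq T := take (size p).-1 p.

Definition visible (X : {set T}) (x y : T) : Prop :=
  exists p, shortest_path x y p /\ {in internal p, forall z, z \notin X}.

Definition mutual_visibility_set (X : {set T}) : Prop :=
  forall x y, x \in X -> y \in X -> visible X x y.

Definition pbool (P : Prop) : bool :=
  if excluded_middle_informative P then true else false.

Definition mu : nat :=
  \max_(S : {set T} | pbool (mutual_visibility_set S)) #|S|.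
End Visibility.

Definition bf_vertex (d : nat) : finType := ('I_d.+1 * {ffun 'I_d -> bool})%type.

Definition flip_bit (d : nat) (c : {ffun 'I_d -> bool}) (i : nat) : {ffun 'I_d -> bool} :=
  [ffun j : 'I_d => if val j == i then ~~ c j else c j].

Definition bf_step (d : nat) (u v : bf_vertex d) : bool :=
  (val v.1 == (val u.1).+1) && ((v.2 == u.2) || (v.2 == flip_bit u.2 u.1)).

Definition bf_adj (d : nat) : rel (bf_vertex d) :=
  fun u v => bf_step u v || bf_step v u.

Definition all_ones (d : nat) : {ffun 'I_d -> bool} := [ffun => true].

Definition bf_X (d : nat) : {set bf_vertex d} :=
  [set v : bf_vertex d | ((val v.1 == 0) || (val v.1 == d)) && (v.2 != all_ones d)].

From Stdlib Require Import ClassicalEpsilon.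
From mathcomp Require Import all_boot zify.
Set Implicit Arguments. Unset Strict Implicit. Unset Printing Implicit Defensive.

(* The extreme levels of BF(d) minus the two all-ones vertices form a
   mutual-visibility set X, hence mu(BF(d)) >= |X| = 2^(d+1) - 2.
   Along an edge the level changes by one, so a walk through z is at least as
   long as the level distances from its ends to z; and bit i changes only on
   edges between levels i and i+1, so a walk whose ends differ in bit i reaches
   level i+1.  Shortest paths avoiding X are then built explicitly:
   - from L_0 to L_d, climb straight up copying the target's bits;
   - inside L_0, with m the highest differing bit, climb to level m+1 writing 1s
     below and come back down; a top vertex in L_d has word 11..1, not in X;
   - the automorphism [l,c] |-> [d-l, reverse c] preserves X and reduces the
     remaining cases (inside L_d, from L_d to L_0) to these two. *)

Section GeneralVisibility.
Variables (T : finType) (e : rel T) (X : {set T}).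

Lemma visible_refl x : visible e X x x.
Proof. by exists [::]. Qed.

Lemma path_walk (G : nat -> T) s n :
  (forall k, s <= k < s + n -> e (G k) (G k.+1)) ->
  path e (G s) (map G (iota s.+1 n)).
Proof.
elim: n s => [|n IH] s hadj //=.
rewrite hadj; last by lia.
by apply: IH => k hk; apply: hadj; lia.
Qed.

Lemma last_walk (G : nat -> T) s n : last (G s) (map G (iota s.+1 n)) = G (s + n).
Proof. by elim: n s => [|n IH] s /=; rewrite ?addn0 // IH addSnnS. Qed.

Lemma visible_of_walk (G : nat -> T) n :
  (forall k, k < n -> e (G k) (G k.+1)) ->
  (forall q, path e (G 0) q -> last (G 0) q = G n -> n <= size q) ->
  (forall k, 0 < k < n -> G k \notin X) ->
  visible e X (G 0) (G n).
Proof.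
move=> hadj hmin hint; exists (map G (iota 1 n)); split; first split.
- by apply: path_walk => k hk; apply: hadj; lia.
- exact: last_walk.
- by move=> q hq hl; rewrite size_map size_iota; apply: hmin.
move=> z; rewrite /internal size_map size_iota -map_take take_iota.
by case/mapP => k; rewrite mem_iota => hk ->; apply: hint; lia.
Qed.

Lemma visible_transport (f g : T -> T) : cancel f g -> cancel g f ->
  (forall a b, e (f a) (f b) = e a b) -> (forall a, (f a \in X) = (a \in X)) ->
  forall x y, visible e X x y -> visible e X (f x) (f y).
Proof.
move=> fK gK fe fX x y [p [[hp hl hmin] hint]].
have ge a b : e (g a) (g b) = e a b by rewrite -fe !gK.
exists (map f p); split; first split.
- by rewrite path_map (eq_path fe).
- by rewrite last_map hl.
- move=> q hq hlq; rewrite size_map -(size_map g q); apply: hmin.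
    by rewrite -(fK x) path_map (eq_path ge).
  by rewrite -(fK x) last_map hlq fK.
move=> z; rewrite /internal size_map -map_take => /mapP [w hw ->].
by rewrite fX; apply: hint.
Qed.

Lemma mu_ge : mutual_visibility_set e X -> #|X| <= mu e.
Proof.
move=> hX; apply: (@leq_bigmax_cond _ _ (fun S : {set T} => #|S|)).
by rewrite /pbool; case: excluded_middle_informative.
Qed.

End GeneralVisibility.

Section Butterfly.
Variable d : nat.
Notation V := (bf_vertex d).
Notation word := {ffun 'I_d -> bool}.
Notation ones := (all_ones d).

Definition lev (v : V) : nat := v.1.

Definition mk (l : nat) (w : word) : V := (inord l, w).

Definition gap (a b : nat) : nat := a - b + (b - a).

Lemma lev_le v : lev v <= d.
Proof. by rewrite /lev -ltnS ltn_ord. Qed.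

Lemma mk_lev v : mk (lev v) v.2 = v.
Proof. by case: v => l w; rewrite /mk /lev /= inord_val. Qed.

Lemma bf_adjC u v : bf_adj u v = @bf_adj d v u.
Proof. exact: orbC. Qed.

Lemma adj_lev u v : bf_adj u v -> lev v = (lev u).+1 \/ lev u = (lev v).+1.
Proof. by case/orP => /andP [/eqP h _]; [left | right]. Qed.

Lemma walk_level_bound p x z : path (@bf_adj d) x p -> z \in x :: p ->
  gap (lev x) (lev z) + gap (lev z) (lev (last x p)) <= size p.
Proof.
elim: p x z => [|y p IH] x z /=; first by rewrite inE => _ /eqP ->; rewrite /gap subnn.
case/andP=> hxy hp; move: (adj_lev hxy); rewrite inE => hl /orP [/eqP -> | hz].
  move: (IH _ _ hp (mem_head y p)) hl; rewrite /gap.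
  by move: (lev x) (lev y) (lev (last y p)) (size p) => a b c n; lia.
move: (IH _ _ hp hz) hl; rewrite /gap.
by move: (lev x) (lev y) (lev z) (lev (last y p)) (size p) => a b c e n; lia.
Qed.

Lemma step_bit u v (i : 'I_d) : bf_step u v -> u.2 i != v.2 i -> lev v = i.+1.
Proof.
rewrite /bf_step => /andP [/eqP hl /orP [/eqP -> | /eqP ->]]; first by rewrite eqxx.
by rewrite ffunE; case: (val i =P u.1) => [-> | _]; rewrite ?eqxx.
Qed.

Lemma walk_crosses_bit p x (i : 'I_d) : path (@bf_adj d) x p ->
  x.2 i != (last x p).2 i -> exists2 z, z \in x :: p & lev z = i.+1.
Proof.
elim: p x => [|y p IH] x /=; first by rewrite eqxx.
case/andP=> hxy hp hne; case: (eqVneq (x.2 i) (y.2 i)) => [e | e].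
  by rewrite e in hne; have [z hz lz] := IH _ hp hne; exists z; rewrite // inE hz orbT.
case/orP: hxy => hs.
  by exists y; [rewrite !inE eqxx orbT | apply: step_bit hs e].
by exists x; [rewrite inE eqxx | apply: step_bit hs _; rewrite eq_sym].
Qed.

Lemma step_mk l (w w' : word) : l < d ->
  (forall j : 'I_d, val j != l -> w j = w' j) -> bf_step (mk l w) (mk l.+1 w').
Proof.
move=> hl hw; rewrite /bf_step /mk /= !inordK ?eqxx //=; try lia.
case: (eqVneq w' w) => //= ne; apply/eqP/ffunP => j; rewrite ffunE.
case: eqP => [hj | /eqP hj]; last by rewrite hw.
case: (eqVneq (w' j) (w j)) => [ej | ]; last by case: (w' j); case: (w j).
case/eqP: ne; apply/ffunP => k; case: (eqVneq (val k) l) => hk; last by rewrite hw.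
by have -> : k = j by apply: val_inj; rewrite hk hj.
Qed.

Definition mix (l : nat) (a b : word) : word :=
  [ffun j : 'I_d => if j < l then b j else a j].

Lemma mix0 a b : mix 0 a b = a.
Proof. by apply/ffunP => j; rewrite ffunE. Qed.

Lemma mix_full a b : mix d a b = b.
Proof. by apply/ffunP => j; rewrite ffunE ltn_ord. Qed.

Lemma adj_mix l (a a' b : word) : l < d ->
  (forall j : 'I_d, l < j -> a j = a' j) ->
  bf_adj (mk l (mix l a b)) (mk l.+1 (mix l.+1 a' b)).
Proof.
move=> hl ha; apply/orP; left; apply: step_mk => // j hj; rewrite !ffunE ltnS.
by case: ltngtP hj => // h _; apply: ha.
Qed.

Lemma mk_inner_notin_X l w : 0 < l < d -> mk l w \notin bf_X d.
Proof. by move=> hl; rewrite inE /= inordK; [apply/negP => /andP [/orP []]; lia | lia]. Qed.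

(* The turning vertex of the walks inside L_0 is outside X: in L_d its word is 11..1. *)
Lemma mix_ones_notin_X l a : 0 < l <= d -> mk l (mix l a ones) \notin bf_X d.
Proof.
move=> hl; have [hld | hld | ->] := ltngtP l d; [by apply: mk_inner_notin_X; lia | lia |].
by rewrite mix_full inE /= eqxx andbF.
Qed.

Lemma differing_bit (a b : word) : a != b -> exists i, a i != b i.
Proof.
move=> hne; apply/existsP; apply: contraNT hne => /existsPn hab.
by apply/eqP/ffunP => i; apply/eqP; rewrite -[_ == _]negbK hab.
Qed.

(* Vertices of L_0 and L_d see each other along a monotone path. *)
Lemma visible_bottom_top x y : lev x = 0 -> lev y = d ->
  visible (@bf_adj d) (bf_X d) x y.
Proof.
move=> lx ly; pose G k := mk k (mix k x.2 y.2).
have G0 : G 0 = x by rewrite /G mix0 -lx mk_lev.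
have Gd : G d = y by rewrite /G mix_full -[X in mk X _]ly mk_lev.
rewrite -G0 -Gd; apply: visible_of_walk.
- by move=> k hk; apply: adj_mix.
- move=> q; rewrite G0 Gd => hq hl.
  by have := walk_level_bound hq (mem_head x q); rewrite hl lx ly /gap; lia.
- by move=> k hk; apply: mk_inner_notin_X.
Qed.

(* Distinct vertices of L_0 see each other through level m+1, where m is
   the highest bit in which they differ. *)
Lemma visible_bottom x y : lev x = 0 -> lev y = 0 -> x.2 != y.2 ->
  visible (@bf_adj d) (bf_X d) x y.
Proof.
move=> lx ly hne; have [i0 hi0] := differing_bit hne.
have [m hm hmax] := @arg_maxnP _ i0 (fun i => x.2 i != y.2 i) val hi0.
have agree (j : 'I_d) : m < j -> x.2 j = y.2 j.
  by move=> hj; apply/eqP; apply: contraTT hj => /hmax; rewrite -leqNgt.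
pose h := m.+1; have hd : h <= d := ltn_ord m.
pose G k := if k < h then mk k (mix k x.2 ones)
            else mk (2 * h - k) (mix (2 * h - k) y.2 ones).
have G0 : G 0 = x by rewrite /G /= mix0 -lx mk_lev.
have G2h : G (2 * h) = y by rewrite /G ltnNge leq_pmull // subnn mix0 -ly mk_lev.
rewrite -G0 -G2h; apply: visible_of_walk.
- move=> k hk; rewrite /G; have [lt_k1 | gt_k1 | eq_k1] := ltngtP k.+1 h.
  + by apply: adj_mix => //; lia.
  + have -> : 2 * h - k = (2 * h - k.+1).+1 by lia.
    by rewrite bf_adjC; apply: adj_mix => //; lia.
  + have -> : 2 * h - k.+1 = k.+1 by lia.
    apply: adj_mix => [|j hj]; first lia.
    by apply: agree; rewrite /h in eq_k1; lia.
- move=> q; rewrite G0 G2h => hq hl.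
  rewrite -hl in hm; have [z hz lz] := walk_crosses_bit hq hm.
  by have := walk_level_bound hq hz; rewrite hl lz lx ly /gap /h; lia.
- by move=> k hk; rewrite /G; case: ifP => hkh; apply: mix_ones_notin_X; lia.
Qed.

Lemma flip_bitK (c : word) i : flip_bit (flip_bit c i) i = c.
Proof. by apply/ffunP => j; rewrite !ffunE; case: eqP; rewrite ?negbK. Qed.

Lemma eq_flip_bit (a b : word) i : (a == flip_bit b i) = (b == flip_bit a i).
Proof. by apply/eqP/eqP => ->; rewrite flip_bitK. Qed.

Definition rev_word (c : word) : word := [ffun j => c (rev_ord j)].
Definition mirror (v : V) : V := (rev_ord v.1, rev_word v.2).

Lemma rev_wordK : involutive rev_word.
Proof. by move=> c; apply/ffunP => j; rewrite !ffunE rev_ordK. Qed.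

Lemma rev_ones : rev_word ones = ones.
Proof. by apply/ffunP => j; rewrite !ffunE. Qed.

Lemma mirrorK : involutive mirror.
Proof. by case=> l c; rewrite /mirror /= rev_ordK rev_wordK. Qed.

Lemma lev_mirror v : lev (mirror v) = d - lev v.
Proof. by rewrite /lev /= subSS. Qed.

Lemma rev_word_flip (c : word) i : i < d ->
  rev_word (flip_bit c i) = flip_bit (rev_word c) (d - i.+1).
Proof.
move=> hi; apply/ffunP => -[j hj]; rewrite !ffunE /=.
suff -> : (d - j.+1 == i) = (j == d - i.+1) by [].
by apply/eqP/eqP; lia.
Qed.

Lemma mirror_step u v : bf_step (mirror v) (mirror u) = bf_step u v.
Proof.
rewrite /bf_step -/(lev (mirror u)) -/(lev (mirror v)) -/(lev u) -/(lev v) !lev_mirror.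
have hu := lev_le u; have hv := lev_le v.
have -> : (d - lev u == (d - lev v).+1) = (lev v == (lev u).+1) by apply/eqP/eqP; lia.
case: eqP => //= hl; rewrite (inj_eq (can_inj rev_wordK)) eq_sym.
have -> : d - lev v = d - (lev u).+1 by lia.
by rewrite -rev_word_flip ?(inj_eq (can_inj rev_wordK)) 1?eq_flip_bit //; lia.
Qed.

Lemma mirror_adj u v : bf_adj (mirror u) (mirror v) = bf_adj u v.
Proof. by rewrite /bf_adj !mirror_step orbC. Qed.

Lemma mirror_X v : (mirror v \in bf_X d) = (v \in bf_X d).
Proof.
case: v => [[l hl] c]; rewrite !inE /= subSS -[in rev_word c != _]rev_ones.
rewrite (inj_eq (can_inj rev_wordK)) orbC.
by congr (_ && _); congr (_ || _); apply/eqP/eqP; lia.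
Qed.

Lemma visible_mirror x y :
  visible (@bf_adj d) (bf_X d) (mirror x) (mirror y) ->
  visible (@bf_adj d) (bf_X d) x y.
Proof.
by move/(visible_transport mirrorK mirrorK mirror_adj mirror_X); rewrite !mirrorK.
Qed.

Lemma bf_X_mutual_visibility : mutual_visibility_set (@bf_adj d) (bf_X d).
Proof.
move=> x y; rewrite !inE => /andP [hx _] /andP [hy _].
have {}hx : (lev x == 0) || (lev x == d) := hx.
have {}hy : (lev y == 0) || (lev y == d) := hy.
case: (eqVneq x y) => [<- | hne]; first exact: visible_refl.
have word_ne : lev x = lev y -> x.2 != y.2.
  by move=> el; apply: contraNneq hne => ew; rewrite -(mk_lev x) -(mk_lev y) el ew.
case/orP: hx => /eqP lx; case/orP: hy => /eqP ly.
- by apply: visible_bottom => //; apply: word_ne; rewrite lx ly.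
- exact: visible_bottom_top.
- by apply: visible_mirror; apply: visible_bottom_top; rewrite lev_mirror ?lx ?ly ?subnn ?subn0.
- apply: visible_mirror; apply: visible_bottom; rewrite ?lev_mirror ?lx ?ly ?subnn //=.
  by rewrite (inj_eq (can_inj rev_wordK)); apply: word_ne; rewrite lx ly.
Qed.

Lemma card_bf_X : 0 < d -> #|bf_X d| = 2 ^ d.+1 - 2.
Proof.
move=> hd.
have -> : bf_X d = setX [set ord0; ord_max] (~: [set ones]).
  by apply/setP => -[l c]; rewrite !inE.
rewrite cardsX cards2 (_ : ord0 != ord_max :> 'I_d.+1); last first.
  by rewrite -val_eqE /= eq_sym -lt0n.
have := cardsC [set ones]; rewrite cards1 card_ffun card_bool card_ord expnS; lia.
Qed.

End Butterfly.

Theorem lemma5p2 (d : nat) (hd : 1 <= d) :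
  mutual_visibility_set (@bf_adj d) (bf_X d) /\
  2 ^ d.+1 - 2 <= mu (@bf_adj d).
Proof.
have hX := @bf_X_mutual_visibility d.
by split=> //; rewrite -card_bf_X //; apply: mu_ge.
Qed.
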